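(* Let $p, m$ be positive integers with $m \le p$, let $\eta > 0$, let $F_{\mathrm{new}}, F_{\mathrm{old}} \in \mathbb{R}^{p\times p}$ be symmetric positive definite matrices, let $g \in \mathbb{R}^p$, and let $G = [g_1,\ldots,g_m] \in \mathbb{R}^{p\times m}$ have full column rank. For $u, w \in \mathbb{R}^p$ write $\|w\|_{F_{\mathrm{new}}} = \sqrt{w^\top F_{\mathrm{new}} w}$. Consider the constrained problem $$\min_{u\in\mathbb{R}^p} \ \| g - F_{\mathrm{new}}^{-1} u\|_{F_{\mathrm{new}}}^2 \quad \text{subject to} \quad F_{\mathrm{old}}^{-1} u \in \operatorname{Col}(G),$$ let $u^*$ be a minimizer, and suppose $c>0$ is such that $v^* = c\,F_{\mathrm{new}}^{-1}(g-u^* )$ satisfies $\|v^*\|_{F_{\mathrm{new}}} = \eta$ (this $v^*$ is called the FOPNG update). Then $$v^* = \eta\,\frac{F_{\mathrm{new}}^{-1} P g}{\sqrt{g^\top P^\top F_{\mathrm{new}}^{-1} P g}},$$ where $$P = I - F_{\mathrm{old}} G\left(G^\top F_{\mathrm{old}} F_{\mathrm{new}}^{-1} F_{\mathrm{old}} G\right)^{-1} G^\top F_{\mathrm{old}}.$$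
   Context: In the paper's setting, $\theta\in\mathbb{R}^p$ are model parameters, $g$ is the gradient of the new-task loss, the columns of $G$ are stored gradients from previous tasks, and $F_{\mathrm{new}}$, $F_{\mathrm{old}}$ are Fisher information matrices $\mathbb{E}_{x}\mathbb{E}_{y\sim p_\theta(\cdot|x)}[\nabla_\theta \log p_\theta(y|x)\nabla_\theta \log p_\theta(y|x)^\top]$ computed on new-task and previous-task data respectively. The paper's regularity assumptions are: the score function exists with finite second moments, $F_{\mathrm{new}}$ is positive definite, and $G$ has full column rank. $\operatorname{Col}(G)$ denotes the column space of $G$. *)

From HB Require Import structures.
From mathcomp Require Import all_boot all_order all_algebra.
From mathcomp Require Import reals.
Set Implicit Arguments. Unset Strict Implicit. Unset Printing Implicit Defensive.
Import Order.TTheory GRing.Theory Num.Theory.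
Local Open Scope ring_scope.

Definition quadf (R : realType) (p : nat) (A : 'M[R]_p) (x : 'cV[R]_p) : R :=
  (x^T *m A *m x) ord0 ord0.

Definition spd (R : realType) (p : nat) (A : 'M[R]_p) : Prop :=
  A^T = A /\ forall x : 'cV[R]_p, x != 0 -> 0 < quadf A x.

Definition Fnorm (R : realType) (p : nat) (F : 'M[R]_p) (w : 'cV[R]_p) : R :=
  Num.sqrt (quadf F w).

Definition in_col (R : realType) (p m : nat) (G : 'M[R]_(p, m)) (w : 'cV[R]_p) : Prop :=
  exists a : 'cV[R]_m, w = G *m a.

(** Writing [B = Fold G], the constraint says exactly [u = B a] for some
    coefficient vector [a], so the problem is a weighted least-squares problem
    in [a].  With [A = Fnew^-1] and the Gram matrix [M = B^T A B] (positive
    definite because [B] has full column rank), the residual at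
    [a* = M^-1 B^T g] is [Fnew]-orthogonal to every admissible direction, which
    gives the Pythagorean identity
    [||g - A B (a* + d)||^2 = ||g - A B a*||^2 + d^T M d].
    Hence [a*] is the unique minimiser, [g - u* = g - B a* = P g], and the
    normalisation [||v*|| = eta] determines the positive scale [c]. *)

From HB Require Import structures.
From mathcomp Require Import all_boot all_order all_algebra.
From mathcomp Require Import reals.
From mathcomp Require Import ring.
Import Order.TTheory GRing.Theory Num.Theory.
Local Open Scope ring_scope.
Set Implicit Arguments. Unset Strict Implicit.

Section QuadraticForms.

Variable R : realType.

Definition posdef n (A : 'M[R]_n) : Prop := forall x, x != 0 -> 0 < quadf A x.

Lemma quadf0 n (A : 'M[R]_n) : quadf A 0 = 0.
Proof. by rewrite /quadf mulmx0 mxE. Qed.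

Lemma quadfZ n (A : 'M[R]_n) (c : R) x : quadf A (c *: x) = c ^+ 2 * quadf A x.
Proof.
by rewrite /quadf -scalemxAr linearZ /= -!scalemxAl !mxE mulrA expr2.
Qed.

Lemma quadf_mulmx n k (A : 'M[R]_n) (B : 'M[R]_(n, k)) x :
  quadf A (B *m x) = quadf (B^T *m A *m B) x.
Proof. by rewrite /quadf trmx_mul !mulmxA. Qed.

Lemma trmx11 (X : 'M[R]_1) : X^T = X.
Proof. by apply/matrixP => i j; rewrite !ord1 mxE. Qed.

Lemma quadfB n (F : 'M[R]_n) (x y : 'cV[R]_n) : F^T = F ->
  quadf F (x - y) = quadf F x - 2 * (x^T *m F *m y) ord0 ord0 + quadf F y.
Proof.
move=> FT; rewrite /quadf (linearB trmx) !mulmxBl !mulmxBr.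
have -> : y^T *m F *m x = x^T *m F *m y.
  by rewrite -[LHS]trmx11 !trmx_mul trmxK FT mulmxA.
by rewrite !mxE; ring.
Qed.

Lemma posdef_ge0 n (A : 'M[R]_n) x : posdef A -> 0 <= quadf A x.
Proof. by move=> Apd; have [->|/Apd/ltW//] := eqVneq x 0; rewrite quadf0. Qed.

Lemma posdef_unitmx n (A : 'M[R]_n) : posdef A -> A \in unitmx.
Proof.
move=> Apd; rewrite -row_free_unit -kermx_eq0; apply/eqP/row_matrixP => i.
rewrite row0; set u := row i (kermx A).
have uA : u *m A = 0 by rewrite /u -row_mul mulmx_ker row0.
apply/eqP; apply: contraT => u_neq0.
have : 0 < quadf A u^T by apply: Apd; rewrite trmx_eq0.
by rewrite /quadf trmxK uA mul0mx mxE ltxx.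
Qed.

Lemma quadf_invmx n (F : 'M[R]_n) x : F^T = F -> F \in unitmx ->
  quadf F (invmx F *m x) = quadf (invmx F) x.
Proof.
by move=> FT Fu; rewrite quadf_mulmx trmx_inv FT -mulmxA mulKmx.
Qed.

Lemma posdef_invmx n (F : 'M[R]_n) : F^T = F -> posdef F -> posdef (invmx F).
Proof.
move=> FT Fpd x x_neq0; have Fu := posdef_unitmx Fpd.
rewrite -quadf_invmx //; apply: Fpd; apply: contra x_neq0 => /eqP Fx0.
by rewrite -(mulKVmx Fu x) Fx0 mulmx0.
Qed.

Lemma posdef_congr n k (A : 'M[R]_n) (B : 'M[R]_(n, k)) :
  posdef A -> row_free B^T -> posdef (B^T *m A *m B).
Proof.
move=> Apd Bfree d d_neq0; rewrite -quadf_mulmx; apply: Apd.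
apply: contra d_neq0 => /eqP Bd0; rewrite -trmx_eq0; apply/eqP.
by apply: (row_free_inj Bfree); rewrite mul0mx -trmx_mul Bd0 trmx0.
Qed.

Lemma Fnorm_sqr n (F : 'M[R]_n) x : posdef F -> Fnorm F x ^+ 2 = quadf F x.
Proof. by move=> Fpd; rewrite /Fnorm sqr_sqrtr // posdef_ge0. Qed.

Lemma FnormZ n (F : 'M[R]_n) (c : R) x : Fnorm F (c *: x) = `|c| * Fnorm F x.
Proof. by rewrite /Fnorm quadfZ sqrtrM ?sqr_ge0 // sqrtr_sqr. Qed.

Lemma Fnorm_rescale n (F : 'M[R]_n) (c eta : R) w :
  0 <= c -> 0 < eta -> Fnorm F (c *: w) = eta ->
  c *: w = (eta / Fnorm F w) *: w.
Proof.
move=> c_ge0 eta_gt0; rewrite FnormZ ger0_norm // => eta_def.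
have Nw_neq0 : Fnorm F w != 0.
  by apply: contraTneq eta_gt0 => Nw0; rewrite -eta_def Nw0 mulr0 ltxx.
by rewrite -eta_def mulfK.
Qed.

End QuadraticForms.

Section WeightedLeastSquares.

Variables (R : realType) (p m : nat).
Variables (F : 'M[R]_p) (B : 'M[R]_(p, m)) (g : 'cV[R]_p).
Hypotheses (FT : F^T = F) (Fpd : posdef F) (Bfree : row_free B^T).

Definition lsq_gram : 'M[R]_m := B^T *m invmx F *m B.

Definition lsq_solution : 'cV[R]_m := invmx lsq_gram *m (B^T *m g).

Local Notation residual a := (g - invmx F *m (B *m a)).

Lemma lsq_gram_posdef : posdef lsq_gram.
Proof. exact/posdef_congr/Bfree/posdef_invmx. Qed.

Lemma lsq_normal_equation : B^T *m residual lsq_solution = 0.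
Proof.
have Mu := posdef_unitmx lsq_gram_posdef.
by rewrite mulmxBr !mulmxA -/lsq_gram mulmxV // mul1mx subrr.
Qed.

Lemma lsq_pythagoras d :
  quadf F (residual (lsq_solution + d)) =
  quadf F (residual lsq_solution) + quadf lsq_gram d.
Proof.
have Fu := posdef_unitmx Fpd.
rewrite mulmxDr mulmxDr opprD addrA quadfB // quadf_invmx // -quadf_mulmx.
suff -> : (residual lsq_solution)^T *m F *m (invmx F *m (B *m d)) = 0.
  by rewrite mxE mulr0 subr0.
rewrite -mulmxA (mulmxA F) mulmxV // mul1mx mulmxA.
by rewrite -[_ *m B]trmxK trmx_mul trmxK lsq_normal_equation trmx0 mul0mx.
Qed.

Lemma lsq_argmin_unique a :
  quadf F (residual a) <= quadf F (residual lsq_solution) -> a = lsq_solution.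
Proof.
apply: contraTeq => a_neq; rewrite -ltNge -(subrKC lsq_solution a).
by rewrite lsq_pythagoras ltrDl lsq_gram_posdef // subr_eq0.
Qed.

End WeightedLeastSquares.

Theorem theorem3 (R : realType) (p m : nat) (eta : R)
  (Fnew Fold : 'M[R]_p) (g : 'cV[R]_p) (G : 'M[R]_(p, m))
  (u_star v_star : 'cV[R]_p) (c : R) :
  (0 < m)%N -> (m <= p)%N -> 0 < eta ->
  spd Fnew -> spd Fold -> \rank G = m ->
  (* u_star minimizes ||g - Fnew^-1 u||_Fnew^2 subject to Fold^-1 u in Col(G) *)
  in_col G (invmx Fold *m u_star) ->
  (forall u : 'cV[R]_p, in_col G (invmx Fold *m u) ->
     Fnorm Fnew (g - invmx Fnew *m u) ^+ 2
       >= Fnorm Fnew (g - invmx Fnew *m u_star) ^+ 2) ->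
  0 < c ->
  v_star = c *: (invmx Fnew *m (g - u_star)) ->
  Fnorm Fnew v_star = eta ->
  let P : 'M[R]_p := 1%:M - Fold *m G *m
      invmx (G^T *m Fold *m invmx Fnew *m Fold *m G) *m G^T *m Fold in
  v_star = (eta / Num.sqrt ((g^T *m P^T *m invmx Fnew *m P *m g) ord0 ord0))
             *: (invmx Fnew *m P *m g).
Proof.
move=> _ _ eta_gt0 [FnT Fnpd] [FoT Fopd] rkG [a_star u_def] u_min c_gt0 v_def.
move=> v_norm P; set B := Fold *m G.
have [Fnu Fou] := (posdef_unitmx Fnpd, posdef_unitmx Fopd).
have BT : B^T = G^T *m Fold by rewrite trmx_mul FoT.
have Bfree : row_free B^T.
  by rewrite BT /row_free mxrankMfree ?row_free_unit // mxrank_tr rkG.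
have u_star_def : u_star = B *m a_star by rewrite -mulmxA -u_def mulKVmx.
have a_opt : a_star = lsq_solution Fnew B g.
  apply: lsq_argmin_unique => //; rewrite -u_star_def -!Fnorm_sqr //.
  by apply: u_min; exists (lsq_solution Fnew B g); rewrite -mulmxA mulKmx.
have res_def : g - u_star = P *m g.
  by rewrite u_star_def a_opt /lsq_solution /lsq_gram BT mulmxBl mul1mx !mulmxA.
have norm_Pg : Num.sqrt ((g^T *m P^T *m invmx Fnew *m P *m g) ord0 ord0)
               = Fnorm Fnew (invmx Fnew *m (P *m g)).
  by rewrite /Fnorm quadf_invmx // /quadf trmx_mul !mulmxA.
rewrite norm_Pg -mulmxA -res_def v_def.
by rewrite -(Fnorm_rescale (ltW c_gt0) eta_gt0) // -v_def.
Qed.
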